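(* We have \[ n_q(k,s)=\sum_{i=1}^{s} q^{(s-i)(k-i-s+1)}\genfrac{[}{]}{0pt}{}{s-1}{i-1}_q\genfrac{[}{]}{0pt}{}{k-s}{i}_q. \]
   Context: $q$ is a prime power. For a $(k - s)$-dimensional affine subspace $H$ of $\mathbb{F}_q^k$ not passing through the origin, $n_q(k,s)$ denotes the number of $s$-dimensional affine subspaces through the origin that are disjoint from $H$ (this is independent of the choice of $H$). For integers $0 \leq s \leq k$, the $q$-binomial (Gaussian) coefficient is $\genfrac{[}{]}{0pt}{}{k}{s}_q = \frac{(q^k - 1) \cdots (q^{k - s+ 1} - 1)}{(q^s - 1) \cdots (q - 1)}$ (empty product equal to $1$), and it is defined to be $0$ for other values of $s,k$. *)

From HB Require Import structures.
From mathcomp Require Import all_boot all_order all_algebra all_field.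
Set Implicit Arguments. Unset Strict Implicit. Unset Printing Implicit Defensive.
Import GRing.Theory.

Definition qbinom (q k s : nat) : nat :=
  if s <= k then
    (\prod_(i < s) (q ^ (k - i) - 1)) %/ (\prod_(i < s) (q ^ i.+1 - 1))
  else 0.

Definition is_lin_subspace (F : finFieldType) (k : nat) (S : {set 'rV[F]_k}) : bool :=
  ((0 : 'rV[F]_k)%R \in S) &&
  [forall u in S, forall v in S, forall c : F, (c *: u + v)%R \in S].

Definition set_dim (F : finFieldType) (k : nat) (S : {set 'rV[F]_k}) : nat :=
  \dim <<enum S>>%VS.

Definition affine_set (F : finFieldType) (k : nat) (a : 'rV[F]_k)
  (V : {vspace 'rV[F]_k}) : {set 'rV[F]_k} :=
  [set x | (x - a)%R \in V].

(* n_q(k,s) relative to the affine subspace H = a + V: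
   number of s-dimensional linear subspaces disjoint from H. *)
Definition n_count (F : finFieldType) (k s : nat) (a : 'rV[F]_k)
  (V : {vspace 'rV[F]_k}) : nat :=
  #|[set S : {set 'rV[F]_k} | is_lin_subspace S && (set_dim S == s)
        && [disjoint S & affine_set a V]]|.

From mathcomp Require Import all_boot all_order all_algebra all_field.
From mathcomp Require Import zify ring.
Set Implicit Arguments. Unset Strict Implicit. Unset Printing Implicit Defensive.
Import GRing.Theory.

(* Put W = V + <[a]>.  Every vector of W outside V is a nonzero multiple of a vector
   of a + V, so an s-dimensional subspace U misses a + V iff U :&: W <= V.  Sort these
   U by j = dim (U :&: V) and double count the pairs (u, y) where u is a j-tuple
   independent in V and y an (s - j)-tuple independent modulo W: each pair spans such
   a U with U :&: V = <<u>>, and each such U is spanned by exactly as many pairs as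
   there are bases u of U :&: V followed by completions y to a basis of U.  Both
   counts are products of differences of powers of q, and their quotient is the j-th
   summand; j = 0 contributes nothing because W has dimension k - s + 1. *)

Section QBinomial.
Variable q : nat.
Hypothesis q_gt1 : 1 < q.

Definition qfall n m := \prod_(t < m) (q ^ (n - t) - 1).

(* [qbinom] is defined by a division; this q-Pascal recursion shows it is exact. *)
Fixpoint qbin n m :=
  match n, m with
  | _, 0 => 1
  | 0, _.+1 => 0
  | n'.+1, m'.+1 => qbin n' m' + q ^ m'.+1 * qbin n' m'.+1
  end.

Lemma expq_gt0 e : 0 < q ^ e.
Proof. by rewrite expn_gt0 (ltnW q_gt1). Qed.

Lemma qfallSS n m : qfall n.+1 m.+1 = (q ^ n.+1 - 1) * qfall n m.
Proof. by rewrite /qfall big_ord_recl subn0. Qed.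

Lemma qfallSr n m : qfall n m.+1 = qfall n m * (q ^ (n - m) - 1).
Proof. by rewrite /qfall big_ord_recr. Qed.

Lemma qfallD n a b : qfall n (a + b) = qfall n a * qfall (n - a) b.
Proof.
by rewrite /qfall big_split_ord; congr (_ * _); apply: eq_bigr => i _; rewrite subnDA.
Qed.

Lemma qfall_gt0 n m : m <= n -> 0 < qfall n m.
Proof.
move=> le_mn; apply/prodn_gt0 => i.
by rewrite subn_gt0 -{1}(expn0 q) ltn_exp2l //; have := ltn_ord i; lia.
Qed.

Lemma qfall_eq0 n m : n < m -> qfall n m = 0.
Proof. by move=> lt_nm; rewrite /qfall (bigD1 (Ordinal lt_nm)) //= subnn subnn. Qed.

(* The q-Pascal recursion of [qbin] matches the factorisation of [qfall n.+1 m.+1]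
   because [q ^ n.+1 - 1 = (q ^ m.+1 - 1) + q ^ m.+1 * (q ^ (n - m) - 1)]. *)
Lemma qbin_qfall n m : qbin n m * qfall m m = qfall n m.
Proof.
elim: n m => [|n IH] [|m] /=; rewrite ?mul1n ?mul0n //.
- by rewrite qfall_eq0.
- by rewrite /qfall !big_ord0.
rewrite mulnDl -mulnA IH [qfall m.+1 m.+1]qfallSS mulnCA IH.
rewrite qfallSS [qfall n m.+1]qfallSr (mulnC (qfall n m)) mulnA -mulnDl.
have [le_mn | lt_nm] := leqP m n; last by rewrite qfall_eq0 ?muln0.
congr (_ * _).
have -> : q ^ n.+1 = q ^ m.+1 * q ^ (n - m) by rewrite -expnD; congr (_ ^ _); lia.
have := expq_gt0 m.+1; have := expq_gt0 (n - m).
rewrite mulnBr muln1; set A := q ^ m.+1; set C := q ^ (n - m) => C_gt0 A_gt0.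
have : A <= A * C by rewrite leq_pmulr.
move: (A * C) => B; lia.
Qed.

Lemma qbin_eq0 n m : n < m -> qbin n m = 0.
Proof.
move=> lt_nm; have /eqP := qbin_qfall n m; rewrite (qfall_eq0 lt_nm) muln_eq0.
by rewrite (gtn_eqF (qfall_gt0 (leqnn m))) orbF => /eqP.
Qed.

Lemma qbin_qfall_compl n m : m <= n -> qbin n m * qfall (n - m) (n - m) = qfall n (n - m).
Proof.
move=> le_mn; apply/eqP; rewrite -(eqn_pmul2r (qfall_gt0 (leqnn m))).
have := qfallD n (n - m) m; rewrite subnK // subKn // => <-.
by rewrite mulnAC qbin_qfall -qfallD subnKC.
Qed.

Lemma qbinomE n m : qbinom q n m = qbin n m.
Proof.
rewrite /qbinom; case: leqP => [le_mn | lt_nm]; last by rewrite qbin_eq0.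
have -> : \prod_(i < m) (q ^ i.+1 - 1) = qfall m m.
  rewrite /qfall (reindex_inj rev_ord_inj) /=; apply: eq_bigr => i _.
  by congr (_ ^ _ - 1); have := ltn_ord i; lia.
by rewrite -/(qfall n m) -qbin_qfall mulnK // qfall_gt0.
Qed.

(* The number of m-tuples of an n-dimensional space over a field with q elements that
   are independent modulo a given d-dimensional subspace (see [card_indep_over]). *)
Definition nindep n d m := \prod_(t < m) (q ^ n - q ^ (d + t)).

Lemma nindepSr n d m : nindep n d m.+1 = nindep n d m * (q ^ n - q ^ (d + m)).
Proof. by rewrite /nindep big_ord_recr. Qed.

Lemma nindep_gt0 n d m : d + m <= n -> 0 < nindep n d m.
Proof.
move=> le_dm_n; apply/prodn_gt0 => i.
by rewrite subn_gt0 ltn_exp2l //; have := ltn_ord i; lia.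
Qed.

Lemma nindep_eq0 n d m : d <= n < d + m -> nindep n d m = 0.
Proof.
move=> /andP[le_dn lt_n_dm]; have lt_nd_m : n - d < m by rewrite ltn_subLR.
by rewrite /nindep (bigD1 (Ordinal lt_nd_m)) //= subnKC // subnn.
Qed.

Lemma nindepE n d m : nindep n d m = \prod_(t < m) q ^ (d + t) * qfall (n - d) m.
Proof.
rewrite /nindep -big_split /=; apply: eq_bigr => i _.
have [le_n_di | lt_di_n] := leqP n (d + i).
  have -> : n - d - i = 0 by lia.
  by rewrite subnn muln0; apply/eqP; rewrite subn_eq0 leq_exp2l.
by rewrite mulnBr muln1 -expnD (_ : d + i + (n - d - i) = n) //; lia.
Qed.

Lemma prod_expD e d m :
  \prod_(t < m) q ^ (e + d + t) = q ^ (m * e) * \prod_(t < m) q ^ (d + t).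
Proof.
rewrite (eq_bigr (fun t : 'I_m => q ^ e * q ^ (d + t))); last first.
  by move=> t _; rewrite -expnD addnA.
by rewrite big_split /= prod_nat_const card_ord -expnM (mulnC e).
Qed.

Lemma nindep_ratio k s j : s <= k -> 0 < j <= s ->
  nindep (k - s) 0 j * nindep k (k - s + 1) (s - j) =
  q ^ ((s - j) * (k + 1 - j - s)) * qbin (s - 1) (j - 1) * qbin (k - s) j
  * (nindep j 0 j * nindep s j (s - j)).
Proof.
move=> le_sk /andP[j_gt0 le_js].
rewrite !nindepE !subn0.
have [le_j_ks | lt_ks_j] := leqP j (k - s); last first.
  by rewrite (qfall_eq0 lt_ks_j) (qbin_eq0 lt_ks_j) !(mul0n, muln0).
have -> : k - (k - s + 1) = s - 1 by lia.
have -> : k - s + 1 = k + 1 - j - s + j by lia.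
rewrite prod_expD -(qbin_qfall (k - s) j).
have := qbin_qfall_compl (n := s - 1) (m := j - 1) ltac:(lia).
rewrite (_ : s - 1 - (j - 1) = s - j); last lia.
move=> <-; ring.
Qed.

End QBinomial.

Lemma card_set_sum (T : finType) (P : pred T) : #|[set x | P x]| = \sum_x P x.
Proof.
by rewrite -sum1_card big_mkcond /=; apply: eq_bigr => x _; rewrite inE; case: (P x).
Qed.

Lemma card_tuple_cons (T : finType) m (P : pred (m.+1.-tuple T)) :
  #|[set t | P t]| = \sum_(t : m.-tuple T) #|[set x | P [tuple of x :: t]]|.
Proof.
under [RHS]eq_bigr => t _ do rewrite (card_set_sum (fun x => P [tuple of x :: t])).
rewrite card_set_sum exchange_big pair_big /=.
pose uncons (t : m.+1.-tuple T) := (thead t, [tuple of behead t]).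
pose cons (p : T * m.-tuple T) := [tuple of p.1 :: p.2].
have consK : cancel cons uncons by case=> x t; congr pair; apply: val_inj.
have unconsK : cancel uncons cons by move=> t; apply: val_inj; case/tupleP: t.
by rewrite (reindex cons) //; exists uncons.
Qed.

Section IndependentTuples.
Variables (F : finFieldType) (k : nat).
Local Notation vT := 'rV[F]_k.
Local Notation q := #|F|.

Lemma card_vspace_diff (U E : {vspace vT}) : (U <= E)%VS ->
  #|[set x | (x \in E) && (x \notin U)]| = q ^ \dim E - q ^ \dim U.
Proof.
move=> sUE; rewrite -!card_vspace.
have -> : [set x | (x \in E) && (x \notin U)] = [set x in E] :\: [set x in U].
  by apply/setP => x; rewrite !inE andbC.
rewrite cardsD !cardsE; congr (_ - _); apply: eq_card => x.
by rewrite [in LHS]unfold_in /= !inE andb_idl // => /(subvP sUE).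
Qed.

Lemma dim_add_line (U : {vspace vT}) x : \dim (U + <[x]>) = \dim U + (x \notin U).
Proof.
have [xU | xNU] /= := boolP (x \in U).
  by rewrite addn0; congr (\dim _); apply/addv_idPl; rewrite -memvE.
have x_neq0 : x != 0%R by apply: contraNneq xNU => ->; rewrite mem0v.
rewrite dimv_disjoint_sum ?dim_vline ?x_neq0 //.
apply/eqP; rewrite -subv0; apply/subvP => y /memv_capP[yU /vlineP[c def_y]].
rewrite memv0 def_y scaler_eq0 (negPf x_neq0) orbF; apply: contraNT xNU => c_neq0.
by rewrite -[x](scalerK c_neq0) -def_y memvZ.
Qed.

Definition indep_over (D E : {vspace vT}) m (t : m.-tuple vT) :=
  all (fun x => x \in E) t && (\dim (D + <<t>>) == \dim D + m).

Lemma indep_overE (D E : {vspace vT}) m (t : m.-tuple vT) :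
  indep_over D E t = [&& all (fun x => x \in E) t, (D :&: <<t>> == 0)%VS & \dim <<t>> == m].
Proof.
rewrite /indep_over; case: (all _ t) => //=.
have := dim_span t; rewrite size_tuple => le_t_m.
apply/eqP/andP => [dimDt | [/eqP capDt0 /eqP dim_t]]; last by rewrite dimv_disjoint_sum ?dim_t.
have /eqP := dimv_sum_cap D <<t>>; rewrite dimDt -addnA eqn_add2l => /eqP sum_cap.
have dim_cap0 : \dim (D :&: <<t>>) = 0.
  by apply/eqP; rewrite -leqn0 -(leq_add2l m) addn0 sum_cap.
by rewrite -dimv_eq0 dim_cap0 -sum_cap dim_cap0 addn0.
Qed.

Lemma card_indep_over (D E : {vspace vT}) m : (D <= E)%VS ->
  #|[set t : m.-tuple vT | indep_over D E t]| = nindep q (\dim E) (\dim D) m.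
Proof.
move=> sDE; elim: m => [|m IH].
  rewrite /nindep big_ord0 -[RHS](expn0 #|vT|) -(card_tuple 0) -cardsT.
  by apply: eq_card => t; rewrite !inE tuple0 /indep_over /= span_nil addv0 addn0 eqxx.
rewrite card_tuple_cons nindepSr -IH card_set_sum big_distrl.
apply: eq_bigr => t _ /=; set U := (D + <<t>>)%VS.
have ext_t x : indep_over D E [tuple of x :: t] =
    indep_over D E t && ((x \in E) && (x \notin U)).
  rewrite /indep_over /= span_cons addvA (addvC D) -addvA -/U addvC dim_add_line.
  have le_U : \dim U <= \dim D + m.
    have := dim_span t; rewrite size_tuple => le_t.
    by rewrite (leq_trans (dimv_add_leqif _ _)) // leq_add2l.
  case: (x \in E) (x \notin U) => [] [] /=;
    rewrite ?andbF ?andbT ?addn0 ?addn1 ?addnS ?eqSS //.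
  by rewrite (ltn_eqF (leq_ltn_trans le_U (ltnSn _))) andbF.
rewrite (_ : [set x | _] = [set x | indep_over D E t && ((x \in E) && (x \notin U))]);
  last by apply/setP => x; rewrite !inE ext_t.
have [indep_t | _] /= := boolP (indep_over D E t); last first.
  by rewrite mul0n; apply/eqP; rewrite cards_eq0; apply/eqP/setP => x; rewrite !inE.
rewrite mul1n card_vspace_diff; first by case/andP: indep_t => _ /eqP ->.
by case/andP: indep_t => /allP tE _; rewrite subv_add sDE; apply/span_subvP.
Qed.

End IndependentTuples.

Section SubspaceSets.
Variables (F : finFieldType) (k : nat).
Local Notation vT := 'rV[F]_k.

Definition vset (U : {vspace vT}) : {set vT} := [set x | x \in U].
Definition span_set (S : {set vT}) : {vspace vT} := <<enum S>>%VS.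

Lemma vsetK : cancel vset span_set.
Proof.
move=> U; apply/eqP; rewrite eqEsubv; apply/andP; split.
  by apply/span_subvP => x; rewrite mem_enum inE.
by apply/subvP => x xU; apply: memv_span; rewrite mem_enum inE.
Qed.

Lemma vset_inj : injective vset.
Proof. exact: can_inj vsetK. Qed.

Lemma vset_lin_subspace U : is_lin_subspace (vset U).
Proof.
rewrite /is_lin_subspace inE mem0v /=.
apply/forall_inP => u; rewrite inE => uU; apply/forall_inP => v; rewrite inE => vU.
by apply/forallP => c; rewrite inE memvD // memvZ.
Qed.

Lemma mem_span_set S : is_lin_subspace S -> span_set S =i S.
Proof.
case/andP => S0 /forall_inP S_closed.
have S_lin c u v : u \in S -> v \in S -> (c *: u + v)%R \in S.
  by move=> uS vS; move/forall_inP: (S_closed u uS) => /(_ v vS) /forallP.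
have span_sub X : all (mem S) X -> {subset <<X>>%VS <= S}.
  elim: X => [_ x|y X IH /andP[yS XS] x]; first by rewrite span_nil memv0 => /eqP ->.
  rewrite span_cons => /memv_addP[w /vlineP[c ->] [z zX ->]].
  exact: S_lin (IH XS z zX).
move=> x; apply/idP/idP => [|xS]; last by apply: memv_span; rewrite mem_enum.
by apply: span_sub; apply/allP => y; rewrite mem_enum.
Qed.

Lemma span_setK S : is_lin_subspace S -> vset (span_set S) = S.
Proof. by move=> linS; apply/setP => x; rewrite inE mem_span_set. Qed.

End SubspaceSets.

Section AffineAvoidance.
Variables (F : finFieldType) (k s : nat) (a : 'rV[F]_k) (V : {vspace 'rV[F]_k}).
Hypotheses (le_sk : s <= k) (dimV : \dim V = k - s) (aNV : a \notin V).
Local Notation vT := 'rV[F]_k.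
Local Notation q := #|F|.
Local Notation W := (V + <[a]>)%VS.

Lemma s_gt0 : 0 < s.
Proof.
rewrite lt0n; move: aNV; apply: contraNneq => s0.
have -> : V = fullv by apply/eqP; rewrite eqEdim subvf dimvf /dim /= mul1n dimV s0 subn0.
exact: memvf.
Qed.

Lemma dimW : \dim W = k - s + 1.
Proof. by rewrite dim_add_line dimV aNV. Qed.

Lemma disjoint_affineE U : [disjoint vset U & affine_set a V] = (U :&: W <= V)%VS.
Proof.
apply/idP/idP => [disjUH | sUWV].
  apply/subvP => x /memv_capP[xU /memv_addP[v vV [w /vlineP[c ->] def_x]]]; subst x.
  have [-> | c_neq0] := eqVneq c 0%R; first by rewrite scale0r addr0.
  have xcU : (c^-1 *: (v + c *: a))%R \in vset U by rewrite inE memvZ.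
  have := disjointFr disjUH xcU.
  by rewrite inE scalerDr scalerA mulVf // scale1r addrK memvZ.
rewrite disjoint_subset; apply/subsetP => x; rewrite !inE => xU.
apply: contra aNV => xaV.
have xV : x \in V by apply: (subvP sUWV); rewrite memv_cap xU -(subrK a x) memv_add ?memv_line.
by rewrite -(subKr x a) memvB.
Qed.

Definition admissible (U : {vspace vT}) := (\dim U == s) && (U :&: W <= V)%VS.

Definition avoiding_cap j := [set S : {set vT} | is_lin_subspace S &&
  admissible (span_set S) && (\dim (span_set S :&: V) == j)].

Lemma n_count_partition : n_count s a V = \sum_(j < s.+1) #|avoiding_cap j|.
Proof.
pose dim_cap S : 'I_s.+1 := inord (\dim (span_set S :&: V)).
rewrite /n_count -sum1_card (partition_big dim_cap xpredT) //=.
apply: eq_bigr => j _; rewrite sum1dep_card; apply: eq_card => S; rewrite !inE.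
case: (boolP (is_lin_subspace S)) => //= linS.
have -> : [disjoint S & affine_set a V] = (span_set S :&: W <= V)%VS.
  by rewrite -disjoint_affineE span_setK.
rewrite /set_dim -/(span_set S) /admissible; case: (\dim (span_set S) =P s) => //= dimS.
case: (_ <= V)%VS => //=; rewrite -(inj_eq val_inj) /= inordK // ltnS -dimS.
exact: dimvS (capvSl _ _).
Qed.

Definition frames j := [set p : j.-tuple vT * (s - j).-tuple vT |
  indep_over 0 V p.1 && indep_over W fullv p.2].

Definition frame_span j (p : j.-tuple vT * (s - j).-tuple vT) := (<<p.1>> + <<p.2>>)%VS.

Lemma card_frames j : #|frames j| = nindep q (k - s) 0 j * nindep q k (k - s + 1) (s - j).
Proof.
have -> : frames j = setX [set u | indep_over 0 V u] [set y | indep_over W fullv y].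
  by apply/setP => -[u y]; rewrite !inE.
by rewrite cardsX !card_indep_over ?sub0v ?subvf // dimv0 dimV dimvf dimW /dim /= mul1n.
Qed.

Lemma frame_spanP j (u : j.-tuple vT) (y : (s - j).-tuple vT) : j <= s ->
  indep_over 0 V u -> indep_over W fullv y ->
  [/\ admissible (<<u>> + <<y>>), ((<<u>> + <<y>>) :&: V = <<u>>)%VS & \dim <<u>> = j].
Proof.
move=> le_js; rewrite !indep_overE cap0v eqxx.
move=> /andP[/allP uV /eqP dim_u] /and3P[_ /eqP capWy0 /eqP dim_y].
have sVu : (<<u>> <= V)%VS by apply/span_subvP.
have sWu : (<<u>> <= W)%VS := subv_trans sVu (addvSl _ _).
have cap_sub : ((<<u>> + <<y>>) :&: W <= <<u>>)%VS.
  apply/subvP => x /memv_capP[/memv_addP[v vu [z zy ->]] vzW].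
  have zW : z \in W by rewrite -(addKr v z) memvD // rpredN (subvP sWu).
  have : z \in (W :&: <<y>>)%VS by rewrite memv_cap zW.
  by rewrite capWy0 memv0 => /eqP ->; rewrite addr0.
have capV : ((<<u>> + <<y>>) :&: V = <<u>>)%VS.
  apply/eqP; rewrite eqEsubv subv_cap addvSl sVu !andbT.
  exact: subv_trans (capvS (subvv _) (addvSl _ _)) cap_sub.
split=> //; rewrite /admissible (subv_trans cap_sub sVu) andbT.
rewrite dimv_disjoint_sum ?dim_u ?dim_y ?subnKC //.
by apply/eqP; rewrite -subv0 -capWy0; apply: capvS sWu (subvv _).
Qed.

Lemma frames_fiber j U : j <= s -> admissible U -> \dim (U :&: V) = j ->
  [set p in frames j | frame_span p == U] =
  setX [set u | indep_over 0 (U :&: V) u] [set y | indep_over (U :&: V) U y].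
Proof.
move=> le_js /andP[/eqP dimU sUWV] dimC; set C := (U :&: V)%VS in dimC *.
apply/setP => -[u y]; rewrite !inE /frame_span /=; apply/idP/idP.
  case/andP=> /andP[indep_u indep_y] /eqP def_U.
  have [_ capV dim_u] := frame_spanP le_js indep_u indep_y.
  have def_C : C = <<u>>%VS by rewrite /C -def_U.
  apply/andP; split.
    rewrite /indep_over add0v dimv0 add0n def_C dim_u eqxx andbT.
    by apply/allP => x; apply: memv_span.
  rewrite /indep_over def_C def_U dimU dim_u subnKC // eqxx andbT.
  by apply/allP => x x_y; rewrite -def_U (subvP (addvSr _ _)) // memv_span.
rewrite !indep_overE cap0v eqxx /=.
case/andP=> /andP[/allP uC /eqP dim_u] /and3P[/allP yU /eqP capCy0 /eqP dim_y].
have sCu : (<<u>> <= C)%VS by apply/span_subvP.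
have def_C : <<u>>%VS = C by apply/eqP; rewrite eqEdim sCu dim_u dimC leqnn.
have sUy : (<<y>> <= U)%VS by apply/span_subvP.
have def_U : (<<u>> + <<y>>)%VS = U.
  apply/eqP; rewrite eqEdim subv_add def_C capvSl sUy dimU.
  by rewrite (dimv_disjoint_sum capCy0) dimC dim_y subnKC ?leqnn.
rewrite def_U dim_u dim_y !eqxx !andbT; apply/and3P; split.
- by apply/allP => x /uC /(subvP (capvSr _ _)).
- by apply/allP => x _; apply: memvf.
rewrite -subv0 -capCy0; apply/subvP => x /memv_capP[xW xy].
have xU := subvP sUy x xy.
by rewrite memv_cap xy andbT memv_cap xU (subvP sUWV) // memv_cap xU xW.
Qed.

Lemma frame_span_avoiding j p : j <= s -> p \in frames j ->
  vset (frame_span p) \in avoiding_cap j.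
Proof.
case: p => u y le_js; rewrite inE => /andP[indep_u indep_y].
have [admS capV dim_u] := frame_spanP le_js indep_u indep_y.
by rewrite inE vset_lin_subspace vsetK /frame_span admS capV dim_u /=.
Qed.

Lemma card_frames_fiber j S : j <= s -> S \in avoiding_cap j ->
  #|[set p in frames j | vset (frame_span p) == S]| = nindep q j 0 j * nindep q s j (s - j).
Proof.
move=> le_js; rewrite inE => /andP[/andP[linS admS] /eqP dimC].
have /andP[/eqP dimU _] := admS.
rewrite -(span_setK linS).
have -> : [set p in frames j | vset (frame_span p) == vset (span_set S)] =
          [set p in frames j | frame_span p == span_set S].
  by apply/setP => p; rewrite !inE (inj_eq (@vset_inj _ _)).
by rewrite frames_fiber // cardsX !card_indep_over ?sub0v ?capvSl // dimv0 dimU dimC.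
Qed.

Lemma card_avoiding_cap_mul j : j <= s ->
  #|avoiding_cap j| * (nindep q j 0 j * nindep q s j (s - j)) = #|frames j|.
Proof.
move=> le_js; rewrite -[in RHS]sum1_card.
rewrite (partition_big (fun p => vset (frame_span p)) (mem (avoiding_cap j))) /=; last first.
  by move=> p; apply: frame_span_avoiding.
rewrite -sum_nat_const; apply: eq_bigr => S capS.
rewrite sum1dep_card -(card_frames_fiber le_js capS).
by congr #|_|; apply/setP => p; rewrite !inE.
Qed.

Let q_gt1 : 1 < q := card_finNzRing_gt1 F.

Lemma card_fiber_gt0 j : j <= s -> 0 < nindep q j 0 j * nindep q s j (s - j).
Proof. by move=> le_js; rewrite muln_gt0 !(nindep_gt0 q_gt1) ?subnKC. Qed.

Lemma card_avoiding_cap0 : #|avoiding_cap 0| = 0.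
Proof.
have := card_avoiding_cap_mul (leq0n s); rewrite card_frames.
rewrite (@nindep_eq0 q k) ?muln0 => [/eqP|]; last by have := s_gt0; lia.
by rewrite muln_eq0 (gtn_eqF (card_fiber_gt0 (leq0n s))) orbF => /eqP.
Qed.

Lemma card_avoiding_cap j : 0 < j <= s -> #|avoiding_cap j| =
  q ^ ((s - j) * (k + 1 - j - s)) * qbin q (s - 1) (j - 1) * qbin q (k - s) j.
Proof.
move=> /andP[j_gt0 le_js]; apply/eqP.
rewrite -(eqn_pmul2r (card_fiber_gt0 le_js)) card_avoiding_cap_mul // card_frames.
by rewrite (nindep_ratio q_gt1 le_sk) ?j_gt0.
Qed.

End AffineAvoidance.

Theorem lemma2p6 (F : finFieldType) (k s : nat) (a : 'rV[F]_k)
  (V : {vspace 'rV[F]_k}) :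
  s <= k -> \dim V = k - s -> a \notin V ->
  n_count s a V =
  \sum_(1 <= i < s.+1)
     #|F| ^ ((s - i) * (k + 1 - i - s)) * qbinom #|F| (s - 1) (i - 1)
       * qbinom #|F| (k - s) i.
Proof.
move=> le_sk dimV aNV.
rewrite n_count_partition // big_ord_recl card_avoiding_cap0 // add0n big_add1 big_mkord.
apply: eq_bigr => j _.
by rewrite card_avoiding_cap ?ltn_ord // !qbinomE // card_finNzRing_gt1.
Qed.
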